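(* Let $a,b\in(0,+\infty)$ satisfy $1<a-b$ and $a+b<2$. Let $\varepsilon$ satisfy $$0<\varepsilon<\min\left\{1;\ \frac{a-1-b}{224\,b}\right\}\quad\text{and}\quad \varepsilon<\frac{2-a-b}{224\,b}.$$ Define $\varphi:\mathbb{R}\to\mathbb{R}$ by $$\varphi(t)=\begin{cases}\frac{3}{2}\pi & \text{if } t\in(-\infty,1],\\ \frac{3}{2}\pi+\varepsilon\ln\ln\big(e+(t-1)^4\big) & \text{if } t\in(1,+\infty),\end{cases}$$ and define $g$ on $[0,+\infty)$ by $g(t)=t^{a+b\sin(\varphi(t))}$. Then $$g''(t)-\frac{g'(t)}{t}\le\{224b\varepsilon+a-2+b\}\frac{g'(t)}{t}<0\qquad\forall t>0,$$ so in particular $\frac{g''(t)\,t}{g'(t)}\le 1$ for all $t>0$; moreover the function $t\mapsto\frac{g'(t)}{t}$ is strictly decreasing on $(0,+\infty)$.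
   Context: Here $e$ is Euler's number and $\ln$ the natural logarithm. The function $g$ belongs to $C^1([0,+\infty))\cap C^2((0,+\infty))$ and satisfies $g'(t)>0$ for $t>0$, so the quantities above are well defined. *)

From Stdlib Require Import Reals.
From Coquelicot Require Import Coquelicot.
Open Scope R_scope.

Definition phi (eps t : R) : R :=
  if Rle_dec t 1 then 3 / 2 * PI
  else 3 / 2 * PI + eps * ln (ln (exp 1 + (t - 1) ^ 4)).

(* g(t) = t^(a + b sin(phi t)) on [0,+oo); g(0) = 0 (exponent is positive).
   Values for t < 0 are irrelevant (only used on t > 0, where derivatives are local). *)
Definition g (a b eps t : R) : R :=
  if Rlt_dec 0 t then Rpower t (a + b * sin (phi eps t)) else 0.

(** The identity [sin (3π/2 + x) = - cos x] turns [g] into [t ^ p(t)] with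
    [p = a - b cos (ε ψ)] and [ψ(t) = ln ln (e + (t-1)₊⁴)].  For the elasticity
    [E = t g'/g = p + t ln t p'] one has [g'' - g'/t = g (E² + t E' - 2 E) / t²].
    The derivatives of [ψ] decay fast enough that [t ψ'], [t ln t ψ'] and
    [t² ln t ψ''] are bounded by absolute constants, so [E - p] and [t E'] are
    [O(b ε)] while [p ∈ [a-b, a+b] ⊂ (1, 2)]; hence
    [E² + t E' - 2 E ≤ (224 b ε + a - 2 + b) E < 0].  Finally
    [(g'/t)' = (g'' - g'/t)/t < 0]. *)

From Stdlib Require Import Reals Lra Lia Psatz.
From Coquelicot Require Import Coquelicot.
Open Scope R_scope.

(* [auto_derive] treats functions it does not know as opaque: discharge its
   [ex_derive f x] side goals and substitute its [Derive f x] terms using the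
   hypotheses [is_derive f x l] in the context. *)
Ltac auto_derive_known :=
  auto_derive;
  [ repeat split; try (eexists; eassumption)
  | repeat match goal with
    | D : is_derive ?f ?x ?l |- context [Derive (fun y : R => ?f y) ?x] =>
        rewrite (is_derive_unique (fun y : R => f y) x l D)
    end ].

Lemma is_derive_ramp_pow (c t : R) (n : nat) :
  is_derive (fun x => Rmax (x - c) 0 ^ S (S n)) t (INR (S (S n)) * Rmax (t - c) 0 ^ S n).
Proof.
  destruct (Rtotal_order t c) as [Ht | [<- | Ht]].
  - apply is_derive_ext_loc with (fun _ => 0).
    + apply locally_interval with m_infty (Finite c); simpl; auto.
      intros y _ Hy. rewrite Rmax_right by lra. simpl; ring.
    + rewrite Rmax_right by lra. auto_derive; auto. simpl; ring.
  - apply is_derive_Reals. intros e He.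
    exists (mkposreal (Rmin 1 e) (Rmin_pos _ _ Rlt_0_1 He)). intros h Hh Hlt; simpl in Hlt.
    pose proof (Rmin_l 1 e). pose proof (Rmin_r 1 e).
    replace (t + h - t) with h by ring. rewrite Rminus_diag, (Rmax_right 0 0) by lra.
    destruct (Rle_dec h 0) as [Hneg | Hpos].
    + rewrite Rmax_right by lra.
      replace ((0 ^ S (S n) - 0 ^ S (S n)) / h - INR (S (S n)) * 0 ^ S n) with 0
        by (simpl; field; auto).
      rewrite Rabs_R0. lra.
    + rewrite Rmax_left by lra. rewrite Rabs_pos_eq in Hlt by lra.
      replace ((h ^ S (S n) - 0 ^ S (S n)) / h - INR (S (S n)) * 0 ^ S n) with (h * h ^ n)
        by (simpl; field; auto).
      rewrite Rabs_pos_eq by (apply Rmult_le_pos; [lra | apply pow_le; lra]).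
      assert (h ^ n <= 1) by (rewrite <- (pow1 n); apply pow_incr; lra). nra.
  - apply is_derive_ext_loc with (fun x => (x - c) ^ S (S n)).
    + apply locally_interval with (Finite c) p_infty; simpl; auto.
      intros y Hy _. rewrite Rmax_left by lra. reflexivity.
    + rewrite Rmax_left by lra. auto_derive; auto. rewrite S_INR. simpl. unfold Rminus. ring.
Qed.

Section VariableExponentPower.

Variables p dp d2p : R -> R.
Hypothesis p_derive : forall t, is_derive p t (dp t).
Hypothesis dp_derive : forall t, is_derive dp t (d2p t).

Definition vpow (t : R) : R := exp (p t * ln t).
Definition elasticity (t : R) : R := t * ln t * dp t + p t.
Definition elasticity_derivative (t : R) : R := ln t * dp t + 2 * dp t + t * ln t * d2p t.
Definition dvpow (t : R) : R := vpow t * elasticity t / t.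
Definition d2vpow (t : R) : R :=
  vpow t * (elasticity t ^ 2 + t * elasticity_derivative t - elasticity t) / t ^ 2.

Lemma elasticity_derive t : 0 < t -> is_derive elasticity t (elasticity_derivative t).
Proof.
  intros Ht. pose proof (p_derive t). pose proof (dp_derive t).
  unfold elasticity. auto_derive_known; try lra.
  unfold elasticity_derivative. field. lra.
Qed.

Lemma vpow_derive t : 0 < t -> is_derive vpow t (dvpow t).
Proof.
  intros Ht. pose proof (p_derive t).
  unfold vpow. auto_derive_known; try lra.
  unfold dvpow, vpow, elasticity. field. lra.
Qed.

Lemma dvpow_derive t : 0 < t -> is_derive dvpow t (d2vpow t).
Proof.
  intros Ht. pose proof (vpow_derive t Ht). pose proof (elasticity_derive t Ht).
  unfold dvpow. auto_derive_known; try lra.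
  unfold d2vpow, dvpow. field. lra.
Qed.

End VariableExponentPower.

Lemma div_id_decreasing (f df : R -> R) :
  (forall t, 0 < t -> is_derive f t (df t)) -> (forall t, 0 < t -> df t < f t / t) ->
  forall s t, 0 < s -> s < t -> f t / t < f s / s.
Proof.
  intros Hf Hdf s t Hs Hst.
  enough (- (f s / s) < - (f t / t)) by lra.
  apply (incr_function (fun x => - (f x / x)) (Finite 0) p_infty
           (fun x => (f x / x - df x) / x)); simpl; auto; try lra.
  - intros x Hx _. pose proof (Hf x Hx). auto_derive_known; try lra. field. lra.
  - intros x Hx _. pose proof (Hdf x Hx). apply Rdiv_lt_0_compat; lra.
Qed.

Lemma elasticity_inequality a b k p x y z :
  0 < k -> 224 * k < a - 1 - b -> 224 * k < 2 - a - b ->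
  a - b <= p <= a + b -> Rabs x <= 8 * k -> Rabs y <= 8 * k -> Rabs z <= 128 * k ->
  0 < x + p /\
  (x + p) ^ 2 + (x + 2 * y + z) - 2 * (x + p) <= (224 * k + a - 2 + b) * (x + p).
Proof.
  intros Hk H1 H2 Hp Hx Hy Hz.
  apply Rabs_le_between in Hx, Hy, Hz.
  set (K := 224 * k + a - 2 + b).
  (* The margin [-224 k] of the first term absorbs [24 k + k + 16 k + 128 k] from the others. *)
  assert (p * (p - 2 - K) <= - 224 * k) by (unfold K; nra).
  assert (HKp : 0 < 2 * p - 1 - K < 3) by (unfold K; lra).
  assert (x * (2 * p - 1 - K) <= 24 * k) by nra.
  assert (x ^ 2 <= k) by nra.
  split; [lra |].
  replace ((x + p) ^ 2 + (x + 2 * y + z) - 2 * (x + p))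
    with (K * (x + p) + p * (p - 2 - K) + x * (2 * p - 1 - K) + x ^ 2 + 2 * y + z) by ring.
  lra.
Qed.

Lemma quartic_bounds s : 0 <= s ->
  1 + s <= 2 + s ^ 4 /\ (1 + s) ^ 2 * s ^ 2 <= 3 * (2 + s ^ 4) /\
  (1 + s) ^ 2 * s ^ 6 <= 2 * (2 + s ^ 4) ^ 2.
Proof.
  intros Hs.
  assert (0 <= (s ^ 2 - 1 / 2) ^ 2) by apply pow2_ge_0.
  assert (0 <= (s - 1 / 2) ^ 2) by apply pow2_ge_0.
  assert (0 <= (s ^ 2 - s - 3 / 2) ^ 2) by apply pow2_ge_0.
  assert (0 <= (s - 3 / 2) ^ 2) by apply pow2_ge_0.
  assert (0 <= s ^ 4) by (apply pow_le; lra).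
  split; [nra | split; nra].
Qed.

Definition ramp (t : R) : R := Rmax (t - 1) 0.
Definition w (t : R) : R := exp 1 + ramp t ^ 4.
Definition dw (t : R) : R := 4 * ramp t ^ 3.
Definition d2w (t : R) : R := 12 * ramp t ^ 2.
Definition psi (t : R) : R := ln (ln (w t)).
Definition dpsi (t : R) : R := dw t / (w t * ln (w t)).
Definition d2psi (t : R) : R :=
  d2w t / (w t * ln (w t)) - dw t ^ 2 * (ln (w t) + 1) / (w t * ln (w t)) ^ 2.

Lemma exp1_gt2 : 2 < exp 1.
Proof. pose proof (exp_ineq1 1). lra. Qed.

Lemma dw_d2w_le1 t : t <= 1 -> dw t = 0 /\ d2w t = 0.
Proof. intros Ht. unfold dw, d2w, ramp. rewrite Rmax_right by lra. split; ring. Qed.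

Lemma ramp_gt1 t : 1 < t -> ramp t = t - 1.
Proof. intros Ht. unfold ramp. apply Rmax_left. lra. Qed.

Lemma w_ge t : exp 1 <= w t.
Proof. unfold w. pose proof (pow_le (ramp t) 4 (Rmax_r _ _)). lra. Qed.

Lemma w_pos t : 0 < w t.
Proof. pose proof (w_ge t). pose proof (exp_pos 1). lra. Qed.

Lemma ln_w_ge1 t : 1 <= ln (w t).
Proof. rewrite <- (ln_exp 1) at 1. apply ln_le; [apply exp_pos | apply w_ge]. Qed.

Lemma w_ge_poly t : 1 < t -> 2 + (t - 1) ^ 4 <= w t.
Proof. intros Ht. unfold w. rewrite ramp_gt1 by exact Ht. pose proof exp1_gt2. lra. Qed.

Lemma w_derive t : is_derive w t (dw t).
Proof.
  replace (dw t) with (0 + INR 4 * ramp t ^ 3) by (unfold dw; simpl; ring).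
  apply (is_derive_plus (fun _ => exp 1) (fun x => ramp x ^ 4)).
  - auto_derive; reflexivity.
  - apply is_derive_ramp_pow.
Qed.

Lemma dw_derive t : is_derive dw t (d2w t).
Proof.
  replace (d2w t) with (4 * (INR 3 * ramp t ^ 2)) by (unfold d2w; simpl; ring).
  apply is_derive_scal, is_derive_ramp_pow.
Qed.

Lemma psi_derive t : is_derive psi t (dpsi t).
Proof.
  pose proof (w_derive t). pose proof (w_pos t). pose proof (ln_w_ge1 t).
  unfold psi. auto_derive_known; try lra.
  unfold dpsi. field. lra.
Qed.

Lemma dpsi_derive t : is_derive dpsi t (d2psi t).
Proof.
  pose proof (w_derive t). pose proof (dw_derive t).
  pose proof (w_pos t). pose proof (ln_w_ge1 t).
  unfold dpsi. auto_derive_known; try nra.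
  unfold d2psi. field. lra.
Qed.

Lemma phi_psi eps t : phi eps t = 3 / 2 * PI + eps * psi t.
Proof.
  unfold phi, psi, w, ramp. destruct (Rle_dec t 1) as [Ht | Ht].
  - rewrite Rmax_right, pow_i, Rplus_0_r, ln_exp, ln_1 by (lra || lia). ring.
  - rewrite Rmax_left by lra. reflexivity.
Qed.

Lemma sin_phi eps t : sin (phi eps t) = - cos (eps * psi t).
Proof.
  rewrite phi_psi, sin_plus.
  replace (3 / 2 * PI) with (3 * (PI / 2)) by field.
  rewrite sin_3PI2, cos_3PI2. ring.
Qed.

Lemma t_dw_sq_le t : (t * dw t) ^ 2 <= 32 * w t ^ 2.
Proof.
  pose proof (pow2_ge_0 (w t)).
  destruct (Rle_dec t 1) as [Ht | Ht].
  - rewrite (proj1 (dw_d2w_le1 t Ht)). simpl. lra.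
  - destruct (quartic_bounds (t - 1)) as (_ & _ & Hpoly); [lra |].
    replace (1 + (t - 1)) with t in Hpoly by ring.
    assert ((2 + (t - 1) ^ 4) ^ 2 <= w t ^ 2).
    { apply pow_incr. split; [pose proof (pow_le (t - 1) 4); lra | apply w_ge_poly; lra]. }
    unfold dw. rewrite ramp_gt1 by lra. nra.
Qed.

Lemma t2_d2w_bounds t : 0 <= t ^ 2 * d2w t <= 36 * w t.
Proof.
  pose proof (w_pos t).
  destruct (Rle_dec t 1) as [Ht | Ht].
  - rewrite (proj2 (dw_d2w_le1 t Ht)). lra.
  - destruct (quartic_bounds (t - 1)) as (_ & Hpoly & _); [lra |].
    replace (1 + (t - 1)) with t in Hpoly by ring.
    pose proof (w_ge_poly t).
    unfold d2w. rewrite ramp_gt1 by lra.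
    split; [apply Rmult_le_pos; [apply pow2_ge_0 | pose proof (pow2_ge_0 (t - 1)); lra] | nra].
Qed.

Lemma ln_le_ln_w t : 0 < t -> ln t <= ln (w t).
Proof.
  intros Ht. apply ln_le; [exact Ht |].
  destruct (Rle_dec t 1) as [H1 | H1].
  - pose proof (w_ge t). pose proof exp1_gt2. lra.
  - destruct (quartic_bounds (t - 1)) as (Hpoly & _ & _); [lra |].
    pose proof (w_ge_poly t). lra.
Qed.

Lemma psi_derivative_bounds t : 0 < t ->
  0 <= t * dpsi t <= 8 /\ 0 <= t * ln t * dpsi t <= 8 /\ Rabs (t ^ 2 * ln t * d2psi t) <= 64.
Proof.
  intros Ht. unfold dpsi, d2psi.
  destruct (Rle_dec t 1) as [H1 | H1].
  { destruct (dw_d2w_le1 t H1) as [-> ->]. unfold Rdiv.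
    rewrite pow_i by lia. rewrite !Rmult_0_l, !Rmult_0_r, Rminus_0_r, Rmult_0_r, Rabs_R0. lra. }
  assert (Hlnt : 0 < ln t) by (rewrite <- ln_1; apply ln_increasing; lra).
  pose proof (w_pos t) as HW. pose proof (ln_w_ge1 t) as HL. pose proof (ln_le_ln_w t Ht).
  pose proof (t_dw_sq_le t). pose proof (t2_d2w_bounds t).
  pose proof (pow_le (ramp t) 3 (Rmax_r _ _)).
  set (W := w t) in *. set (L := ln W) in *.
  assert (HB : 0 <= t * dw t / W /\ (t * dw t / W) ^ 2 <= 32).
  { split; [apply Rdiv_le_0_compat; unfold dw; nra |].
    replace ((t * dw t / W) ^ 2) with ((t * dw t) ^ 2 / W ^ 2) by (field; lra).
    apply Rle_div_l; nra. }
  assert (HC : 0 <= t ^ 2 * d2w t / W <= 36).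
  { split; [apply Rdiv_le_0_compat | apply Rle_div_l]; lra. }
  assert (Hr : 0 <= ln t / L <= 1).
  { split; [apply Rdiv_le_0_compat | apply (Rdiv_le_1 (ln t) L)]; lra. }
  assert (HiL : 0 < / L <= 1).
  { split; [apply Rinv_0_lt_compat; lra |]. rewrite <- Rinv_1. apply Rinv_le_contravar; lra. }
  set (B := t * dw t / W) in *. set (C := t ^ 2 * d2w t / W) in *. set (r := ln t / L) in *.
  replace (t * (dw t / (W * L))) with (B / L) by (unfold B; field; lra).
  replace (t * ln t * (dw t / (W * L))) with (r * B) by (unfold r, B; field; lra).
  replace (t ^ 2 * ln t * (d2w t / (W * L) - dw t ^ 2 * (L + 1) / (W * L) ^ 2))
    with (r * (C - B ^ 2 * (1 + / L))) by (unfold r, B, C; field; lra).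
  assert (B <= 8) by nra.
  assert (0 <= B ^ 2 * (1 + / L) <= 64) by nra.
  split; [| split].
  - split; [apply Rdiv_le_0_compat | apply Rle_div_l]; nra.
  - split; nra.
  - apply Rabs_le. split; nra.
Qed.

Section Exponent.

Variables a b eps : R.

Definition expo (t : R) : R := a - b * cos (eps * psi t).
Definition dexpo (t : R) : R := b * eps * sin (eps * psi t) * dpsi t.
Definition d2expo (t : R) : R :=
  b * eps * (eps * cos (eps * psi t) * dpsi t ^ 2 + sin (eps * psi t) * d2psi t).

Lemma expo_derive t : is_derive expo t (dexpo t).
Proof.
  pose proof (psi_derive t).
  unfold expo. auto_derive_known. unfold dexpo. ring.
Qed.

Lemma dexpo_derive t : is_derive dexpo t (d2expo t).
Proof.
  pose proof (psi_derive t). pose proof (dpsi_derive t).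
  unfold dexpo. auto_derive_known. unfold d2expo. ring.
Qed.

Lemma g_vpow t : 0 < t -> g a b eps t = vpow expo t.
Proof.
  intros Ht. unfold g, vpow, expo, Rpower. destruct (Rlt_dec 0 t) as [_ | ?]; [| lra].
  rewrite sin_phi. f_equal. ring.
Qed.

Lemma expo_range t : 0 <= b -> a - b <= expo t <= a + b.
Proof. intros Hb. unfold expo. pose proof (COS_bound (eps * psi t)). nra. Qed.

Lemma dexpo_bounds t : 0 < b -> 0 < eps <= 1 -> 0 < t ->
  Rabs (t * ln t * dexpo t) <= 8 * (b * eps) /\
  Rabs (t * dexpo t) <= 8 * (b * eps) /\
  Rabs (t ^ 2 * ln t * d2expo t) <= 128 * (b * eps).
Proof.
  intros Hb Heps Ht.
  destruct (psi_derivative_bounds t Ht) as (Hu & Hv & Hz). apply Rabs_le_between in Hz.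
  pose proof (SIN_bound (eps * psi t)). pose proof (COS_bound (eps * psi t)).
  assert (Hk : 0 < b * eps) by nra.
  unfold dexpo, d2expo.
  set (c := cos (eps * psi t)) in *. set (s := sin (eps * psi t)) in *.
  replace (t * ln t * (b * eps * s * dpsi t)) with (b * eps * (s * (t * ln t * dpsi t))) by ring.
  replace (t * (b * eps * s * dpsi t)) with (b * eps * (s * (t * dpsi t))) by ring.
  replace (t ^ 2 * ln t * (b * eps * (eps * c * dpsi t ^ 2 + s * d2psi t)))
    with (b * eps * (eps * c * ((t * dpsi t) * (t * ln t * dpsi t)) + s * (t ^ 2 * ln t * d2psi t)))
    by ring.
  set (u := t * dpsi t) in *. set (v := t * ln t * dpsi t) in *.
  set (z := t ^ 2 * ln t * d2psi t) in *.
  assert (-8 <= s * u <= 8) by nra.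
  assert (-8 <= s * v <= 8) by nra.
  assert (0 <= u * v <= 64) by nra.
  assert (-64 <= c * (u * v) <= 64) by nra.
  assert (-128 <= eps * c * (u * v) + s * z <= 128) by nra.
  set (k := b * eps) in *.
  repeat split; apply Rabs_le_between; split; nra.
Qed.

Lemma g_derive t : 0 < t -> is_derive (g a b eps) t (dvpow expo dexpo t).
Proof.
  intros Ht. apply is_derive_ext_loc with (vpow expo).
  - apply locally_interval with (Finite 0) p_infty; simpl; auto.
    intros s Hs _. symmetry. apply g_vpow, Hs.
  - apply vpow_derive; [apply expo_derive | exact Ht].
Qed.

Lemma Derive_g_derive t : 0 < t -> is_derive (Derive (g a b eps)) t (d2vpow expo dexpo d2expo t).
Proof.
  intros Ht. apply is_derive_ext_loc with (dvpow expo dexpo).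
  - apply locally_interval with (Finite 0) p_infty; simpl; auto.
    intros s Hs _. symmetry. apply is_derive_unique, g_derive, Hs.
  - apply dvpow_derive; [apply expo_derive | apply dexpo_derive | exact Ht].
Qed.

Lemma dvpow_expo_bounds t :
  0 < b -> 0 < eps <= 1 -> 224 * (b * eps) < a - 1 - b -> 224 * (b * eps) < 2 - a - b -> 0 < t ->
  0 < dvpow expo dexpo t /\
  d2vpow expo dexpo d2expo t - dvpow expo dexpo t / t
    <= (224 * b * eps + a - 2 + b) * (dvpow expo dexpo t / t).
Proof.
  intros Hb Heps H1 H2 Ht.
  destruct (dexpo_bounds t Hb Heps Ht) as (Hx & Hy & Hz).
  assert (Hk : 0 < b * eps) by nra.
  destruct (elasticity_inequality _ _ _ _ _ _ _ Hk H1 H2 (expo_range t (Rlt_le _ _ Hb))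
              Hx Hy Hz) as [HE Hineq].
  assert (Hv : 0 < vpow expo t) by apply exp_pos.
  unfold dvpow, d2vpow, elasticity, elasticity_derivative.
  set (x := t * ln t * dexpo t) in *. set (p := expo t) in *.
  replace (t * (ln t * dexpo t + 2 * dexpo t + t * ln t * d2expo t))
    with (x + 2 * (t * dexpo t) + t ^ 2 * ln t * d2expo t) by (unfold x; ring).
  set (Q := x + 2 * (t * dexpo t) + t ^ 2 * ln t * d2expo t) in *.
  set (v := vpow expo t) in *.
  assert (Hc : 0 < v / t ^ 2) by (apply Rdiv_lt_0_compat; [| apply pow_lt]; lra).
  split; [apply Rdiv_lt_0_compat; nra |].
  replace (v * ((x + p) ^ 2 + Q - (x + p)) / t ^ 2 - v * (x + p) / t / t)
    with (v / t ^ 2 * ((x + p) ^ 2 + Q - 2 * (x + p))) by (field; lra).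
  replace ((224 * b * eps + a - 2 + b) * (v * (x + p) / t / t))
    with (v / t ^ 2 * ((224 * (b * eps) + a - 2 + b) * (x + p))) by (field; lra).
  apply Rmult_le_compat_l; lra.
Qed.

End Exponent.

Theorem theorem5p1 (a b eps : R)
  (ha : 0 < a) (hb : 0 < b) (hab1 : 1 < a - b) (hab2 : a + b < 2)
  (he0 : 0 < eps) (he1 : eps < 1)
  (he2 : eps < (a - 1 - b) / (224 * b))
  (he3 : eps < (2 - a - b) / (224 * b)) :
  (forall t, 0 < t ->
     ex_derive (g a b eps) t /\ ex_derive (Derive (g a b eps)) t /\
     0 < Derive (g a b eps) t /\
     Derive (Derive (g a b eps)) t - Derive (g a b eps) t / t
       <= (224 * b * eps + a - 2 + b) * (Derive (g a b eps) t / t) /\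
     (224 * b * eps + a - 2 + b) * (Derive (g a b eps) t / t) < 0 /\
     Derive (Derive (g a b eps)) t * t / Derive (g a b eps) t <= 1) /\
  (forall s t, 0 < s -> s < t ->
     Derive (g a b eps) t / t < Derive (g a b eps) s / s).
Proof.
  apply Rlt_div_r in he2, he3; [| lra | lra].
  assert (HK : 224 * b * eps + a - 2 + b < 0) by lra.
  assert (Hg : forall t, 0 < t ->
    0 < Derive (g a b eps) t /\
    Derive (Derive (g a b eps)) t - Derive (g a b eps) t / t
      <= (224 * b * eps + a - 2 + b) * (Derive (g a b eps) t / t) /\
    (224 * b * eps + a - 2 + b) * (Derive (g a b eps) t / t) < 0).
  { intros t Ht.
    rewrite (is_derive_unique _ _ _ (g_derive a b eps t Ht)),
            (is_derive_unique _ _ _ (Derive_g_derive a b eps t Ht)).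
    destruct (dvpow_expo_bounds a b eps t) as [Hpos Hle]; try lra.
    assert (0 < dvpow (expo a b eps) (dexpo b eps) t / t) by (apply Rdiv_lt_0_compat; lra).
    repeat split; nra. }
  split.
  - intros t Ht. destruct (Hg t Ht) as (Hpos & Hle & Hneg).
    assert (Hlt : Derive (Derive (g a b eps)) t < Derive (g a b eps) t / t) by lra.
    apply Rlt_div_r in Hlt; [| lra].
    repeat split; try assumption.
    + eexists. apply g_derive, Ht.
    + eexists. apply Derive_g_derive, Ht.
    + apply Rle_div_l; lra.
  - apply div_id_decreasing with (Derive (Derive (g a b eps))).
    + intros t Ht. apply Derive_correct. eexists. apply Derive_g_derive, Ht.
    + intros t Ht. destruct (Hg t Ht) as (_ & Hle & Hneg). lra.
Qed.
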